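(* Let $s\in(0,1)$, let $\Omega\subset\mathbb{R}^N$ be a bounded open set of class $C^{1,1}$, and let $X\in C^0(\overline\Omega;\mathbb{R}^N)$. Let $u\in C^s(\overline\Omega)\cap C^1(\Omega)$ with $u=0$ on $\mathbb{R}^N\setminus\Omega$, such that $\psi:=u/\delta^s$ satisfies, for some $\alpha\in(0,1)$ and $c>0$: - $\|\psi\|_{C^\alpha(\overline\Omega)}\le c$; - $|\nabla\psi(x)|\le c\,\delta(x)^{\alpha-1}$ for all $x\in\Omega$. Let $U_k:=u\,(\zeta_k\circ\delta)$ and $g^0_k:=\nabla U_k\cdot X$. Then there is a constant $C>0$ such that $$k^{s-1}\big|g^0_k(\Psi(\sigma,r/k))\big|\le C(r^{s-1}+r^{s-1+\alpha})$$ for all $k\in\mathbb{N}$, $\sigma\in\partial\Omega$ and $0<r<k\varepsilon_\Omega$. Moreover, $$\lim_{k\to\infty}k^{s-1}g^0_k(\Psi(\sigma,r/k))=h'(r)\,\psi(\sigma)\,X(\sigma)\cdot\nu(\sigma)$$ for every $\sigma\in\partial\Omega$ and $r>0$.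
   Context: $\delta\in C^{1,1}(\mathbb{R}^N)$ is a fixed function equal to the signed distance $\mathrm{dist}(\cdot,\mathbb{R}^N\setminus\Omega)-\mathrm{dist}(\cdot,\Omega)$ near $\partial\Omega$, positive in $\Omega$, negative in $\mathbb{R}^N\setminus\overline\Omega$. $\nu$ is the interior unit normal on $\partial\Omega$, and $\psi$ on $\partial\Omega$ is its continuous extension. $\varepsilon_\Omega>0$ is fixed so that $\Psi:\partial\Omega\times(-\varepsilon_\Omega,\varepsilon_\Omega)\to\{x:|\delta(x)|<\varepsilon_\Omega\}$, $\Psi(\sigma,r)=\sigma+r\nu(\sigma)$, is a bi-Lipschitz bijection with $\delta(\Psi(\sigma,r))=r$. Fix $\rho\in C^\infty_c((-2,2))$ with $0\le\rho\le1$ and $\rho\equiv1$ on $(-1,1)$. Put $\zeta=1-\rho$, $\rho_k(t)=\rho(kt)$, $\zeta_k=1-\rho_k$, and $h(r)=r_+^s\zeta(r)$. *)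

From Stdlib Require Import Reals Lra Lia.
Open Scope R_scope.

(* Points of R^N are represented by  nat -> R ; only coordinates 0..N-1
   matter: every notion below (dot, norm, dist) only reads these. *)
Definition vec := nat -> R.

Fixpoint sumN (n : nat) (f : nat -> R) : R :=
  match n with O => 0 | S m => sumN m f + f m end.

Definition dot (N : nat) (x y : vec) : R := sumN N (fun i => x i * y i).
Definition vnorm (N : nat) (x : vec) : R := sqrt (dot N x x).
Definition vsub (x y : vec) : vec := fun i => x i - y i.
Definition vadd (x y : vec) : vec := fun i => x i + y i.
Definition vscal (a : R) (x : vec) : vec := fun i => a * x i.
Definition vdist (N : nat) (x y : vec) : R := vnorm N (vsub x y).

(* x^a for x > 0, and 0 for x <= 0 (used with a > 0: Hoelder moduli, r_+^s) *)
Definition ppow (x a : R) : R := if Rlt_dec 0 x then Rpower x a else 0.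

Definition Frechet (N : nat) (f : vec -> R) (x g : vec) : Prop :=
  forall eps, 0 < eps -> exists d, 0 < d /\ forall y, vdist N y x < d ->
    Rabs (f y - f x - dot N g (vsub y x)) <= eps * vdist N y x.

Definition C11 (n : nat) (f : vec -> R) : Prop :=
  exists (Df : vec -> vec) (L : R),
    (forall x, Frechet n f x (Df x)) /\
    (forall x y, vnorm n (vsub (Df x) (Df y)) <= L * vdist n x y).

Definition is_open (N : nat) (O : vec -> Prop) : Prop :=
  forall x, O x -> exists r, 0 < r /\ forall y, vdist N y x < r -> O y.
Definition is_bounded (N : nat) (O : vec -> Prop) : Prop :=
  exists M, forall x, O x -> vnorm N x <= M.
Definition closure (N : nat) (O : vec -> Prop) (x : vec) : Prop :=
  forall eps, 0 < eps -> exists y, O y /\ vdist N x y < eps.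
Definition boundary (N : nat) (O : vec -> Prop) (x : vec) : Prop :=
  closure N O x /\ ~ O x.

(* Bounded open set of class C^{1,1}: near every boundary point, in suitable
   orthonormal coordinates e_0..e_{N-1}, Omega is the supergraph of a
   C^{1,1} function of the first N-1 coordinates. *)
Definition C11_domain (N : nat) (O : vec -> Prop) : Prop :=
  forall x0, boundary N O x0 ->
    exists (e : nat -> vec) (r : R) (gam : vec -> R),
      0 < r /\
      (forall i j, (i < N)%nat -> (j < N)%nat ->
         dot N (e i) (e j) = if Nat.eqb i j then 1 else 0) /\
      C11 (N - 1) gam /\
      forall x, vdist N x x0 < r ->
        (O x <-> gam (fun i => dot N (vsub x x0) (e i))
                    < dot N (vsub x x0) (e (N - 1)%nat)).

Definition IsInfDist (N : nat) (A : vec -> Prop) (x : vec) (d : R) : Prop :=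
  (forall y, A y -> d <= vdist N x y) /\
  (forall e, 0 < e -> exists y, A y /\ vdist N x y < d + e).

Definition contv_on (N : nat) (S : vec -> Prop) (F : vec -> vec) : Prop :=
  forall x, S x -> forall eps, 0 < eps -> exists d, 0 < d /\
    forall y, S y -> vdist N y x < d -> vdist N (F y) (F x) < eps.

Definition smooth (f : R -> R) : Prop :=
  exists D : nat -> R -> R, (forall x, D O x = f x) /\
    forall n x, derivable_pt_lim (D n) x (D (S n) x).

Definition zeta (rho : R -> R) (t : R) : R := 1 - rho t.
Definition zetak (rho : R -> R) (k : nat) (t : R) : R := 1 - rho (INR k * t).
Definition hfun (s : R) (rho : R -> R) (r : R) : R := ppow r s * zeta rho r.

Definition Psi (nu : vec -> vec) (sigma : vec) (r : R) : vec :=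
  vadd sigma (vscal r (nu sigma)).

Definition Uk (rho : R -> R) (delta u : vec -> R) (k : nat) (x : vec) : R :=
  u x * zetak rho k (delta x).

(* Put d = r/k and x = Psi(sigma, d), so that delta(x) = d. Writing u = psi delta^s, the
   product rule and the scaling k^(s-1) d^s = r^(s-1) d give the exact identity
     k^(s-1) grad U_k(x) = (1 - rho r) r^(s-1) d grad psi(x) + h'(r) psi(x) grad delta(x).
   The gradient bound on psi makes the first term O(r^(s-1) d^alpha) = O(r^(s-1+alpha) k^(-alpha)),
   the second is O(r^(s-1)); as k -> oo, x -> sigma and grad delta(sigma) = nu(sigma), so only
   h'(r) psi(sigma) nu(sigma) survives. *)

From Stdlib Require Import Reals Lra Lia ZArith Classical FunctionalExtensionality IndefiniteDescription.
Open Scope R_scope.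

(** * Finite sums and the Euclidean structure *)

Lemma sumN_ext n f g : (forall i, (i < n)%nat -> f i = g i) -> sumN n f = sumN n g.
Proof.
  induction n as [|n IH]; simpl; intros H; auto.
  rewrite IH, H; [reflexivity | lia | intros; apply H; lia].
Qed.

Lemma sumN_plus n f g : sumN n (fun i => f i + g i) = sumN n f + sumN n g.
Proof. induction n as [|n IH]; simpl; [lra | rewrite IH; lra]. Qed.

Lemma sumN_scal n c f : sumN n (fun i => c * f i) = c * sumN n f.
Proof. induction n as [|n IH]; simpl; [lra | rewrite IH; lra]. Qed.

Lemma sumN_const n c : sumN n (fun _ => c) = INR n * c.
Proof. induction n as [|n IH]; cbn [sumN]; [simpl; lra | rewrite IH, S_INR; lra]. Qed.

Lemma sumN_le n f g : (forall i, (i < n)%nat -> f i <= g i) -> sumN n f <= sumN n g.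
Proof.
  induction n as [|n IH]; simpl; intros H; [lra|].
  assert (sumN n f <= sumN n g) by (apply IH; intros; apply H; lia).
  assert (f n <= g n) by (apply H; lia). lra.
Qed.

Lemma sumN_nonneg n f : (forall i, (i < n)%nat -> 0 <= f i) -> 0 <= sumN n f.
Proof. intros H. rewrite <- (Rmult_0_r (INR n)), <- sumN_const. apply sumN_le; auto. Qed.

Lemma sumN_abs n f : Rabs (sumN n f) <= sumN n (fun i => Rabs (f i)).
Proof.
  induction n as [|n IH]; simpl; [rewrite Rabs_R0; lra|].
  eapply Rle_trans; [apply Rabs_triang | lra].
Qed.

Lemma sumN_term_le n f i :
  (forall j, (j < n)%nat -> 0 <= f j) -> (i < n)%nat -> f i <= sumN n f.
Proof.
  induction n as [|n IH]; simpl; intros H Hi; [lia|].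
  assert (0 <= sumN n f) by (apply sumN_nonneg; intros; apply H; lia).
  destruct (Nat.eq_dec i n) as [->|Hin]; [lra|].
  assert (f i <= sumN n f) by (apply IH; [intros; apply H | ]; lia).
  assert (0 <= f n) by (apply H; lia). lra.
Qed.

Definition unitv (i : nat) : vec := fun j => if Nat.eqb j i then 1 else 0.

Definition L1 (N : nat) (w : vec) : R := sumN N (fun i => Rabs (w i)).

Lemma dot_unitv N g i : (i < N)%nat -> dot N g (unitv i) = g i.
Proof.
  unfold dot, unitv. induction N as [|N IH]; simpl; intros Hi; [lia|].
  destruct (Nat.eq_dec i N) as [->|HiN].
  - rewrite Nat.eqb_refl, (sumN_ext _ _ (fun _ => 0)), sumN_const; [lra|].
    intros j Hj. replace (Nat.eqb j N) with false by (symmetry; apply Nat.eqb_neq; lia). lra.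
  - rewrite IH by lia. replace (Nat.eqb N i) with false by (symmetry; apply Nat.eqb_neq; lia). lra.
Qed.

Lemma dot_comm N a b : dot N a b = dot N b a.
Proof. unfold dot; apply sumN_ext; intros; ring. Qed.

Lemma dot_add_l N a b c : dot N (vadd a b) c = dot N a c + dot N b c.
Proof. unfold dot, vadd. rewrite <- sumN_plus. apply sumN_ext; intros; ring. Qed.

Lemma dot_scal_l N a c t : dot N (vscal t a) c = t * dot N a c.
Proof. unfold dot, vscal. rewrite <- sumN_scal. apply sumN_ext; intros; ring. Qed.

Lemma dot_sub_dir N g x v t : dot N g (vsub (vadd x (vscal t v)) x) = t * dot N g v.
Proof. unfold dot, vsub, vadd, vscal. rewrite <- sumN_scal. apply sumN_ext; intros; ring. Qed.

Lemma vnorm_nonneg N w : 0 <= vnorm N w.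
Proof. apply sqrt_pos. Qed.

Lemma vnorm_ext N a b : (forall i, (i < N)%nat -> a i = b i) -> vnorm N a = vnorm N b.
Proof. intros H; unfold vnorm, dot. f_equal. apply sumN_ext; intros; rewrite H; auto. Qed.

Lemma vnorm_scal N t v : vnorm N (vscal t v) = Rabs t * vnorm N v.
Proof.
  unfold vnorm. replace (dot N (vscal t v) (vscal t v)) with ((t * t) * dot N v v).
  - rewrite sqrt_mult_alt by nra. rewrite <- (sqrt_Rsqr_abs t). reflexivity.
  - unfold dot, vscal. rewrite <- sumN_scal. apply sumN_ext; intros; ring.
Qed.

Lemma coord_le_vnorm N w i : (i < N)%nat -> Rabs (w i) <= vnorm N w.
Proof.
  intros Hi. unfold vnorm. rewrite <- sqrt_Rsqr_abs. apply sqrt_le_1_alt.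
  apply (sumN_term_le N (fun i => w i * w i)); auto. intros; nra.
Qed.

Lemma vdist_refl N x : vdist N x x = 0.
Proof.
  unfold vdist. rewrite (vnorm_ext N _ (vscal 0 x)) by (intros; unfold vsub, vscal; ring).
  rewrite vnorm_scal, Rabs_R0; ring.
Qed.

Lemma vdist_dir N x v t : vdist N (vadd x (vscal t v)) x = Rabs t * vnorm N v.
Proof.
  unfold vdist. rewrite <- vnorm_scal.
  apply vnorm_ext; intros; unfold vsub, vadd, vscal; ring.
Qed.

Lemma L1_nonneg N w : 0 <= L1 N w.
Proof. apply sumN_nonneg; intros; apply Rabs_pos. Qed.

Lemma vnorm_le_L1 N w : vnorm N w <= L1 N w.
Proof.
  unfold vnorm. rewrite <- (sqrt_Rsqr (L1 N w)) by apply L1_nonneg.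
  apply sqrt_le_1_alt. unfold Rsqr, L1, dot. induction N as [|N IH]; simpl; [lra|].
  assert (0 <= sumN N (fun i => Rabs (w i))) by (apply sumN_nonneg; intros; apply Rabs_pos).
  assert (Rabs (w N) * Rabs (w N) = w N * w N) by (rewrite <- Rabs_mult; apply Rabs_right; nra).
  assert (0 <= Rabs (w N)) by apply Rabs_pos. nra.
Qed.

Lemma L1_le_vnorm N a : L1 N a <= INR N * vnorm N a.
Proof. unfold L1. rewrite <- sumN_const. apply sumN_le; intros; apply coord_le_vnorm; auto. Qed.

Lemma L1_triangle N a b c : L1 N (vsub a c) <= L1 N (vsub a b) + L1 N (vsub b c).
Proof.
  unfold L1, vsub. rewrite <- sumN_plus. apply sumN_le; intros.
  replace (a i - c i) with ((a i - b i) + (b i - c i)) by ring. apply Rabs_triang.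
Qed.

Lemma L1_vsub_sym N a b : L1 N (vsub a b) = L1 N (vsub b a).
Proof. unfold L1, vsub. apply sumN_ext; intros. rewrite <- Rabs_Ropp. f_equal; ring. Qed.

Lemma L1_le_vsub N a b : L1 N a <= L1 N b + L1 N (vsub a b).
Proof.
  unfold L1, vsub. rewrite <- sumN_plus. apply sumN_le; intros.
  replace (a i) with (b i + (a i - b i)) at 1 by ring. apply Rabs_triang.
Qed.

Lemma dot_le_vnorm_L1 N a b : Rabs (dot N a b) <= vnorm N a * L1 N b.
Proof.
  unfold dot, L1. eapply Rle_trans; [apply sumN_abs|]. rewrite <- sumN_scal.
  apply sumN_le; intros i Hi. rewrite Rabs_mult.
  apply Rmult_le_compat_r; [apply Rabs_pos | apply coord_le_vnorm; auto].
Qed.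

(** * Fréchet derivatives *)

Lemma div_succ_mult_le a b : 0 <= a -> 0 <= b -> a / (a + 1) * b <= b.
Proof.
  intros. apply Rmult_le_reg_r with (a + 1); [lra|].
  replace (a / (a + 1) * b * (a + 1)) with (a * b) by (field; lra). nra.
Qed.


Lemma Frechet_derivable_dir N f x g v : Frechet N f x g ->
  derivable_pt_lim (fun t => f (vadd x (vscal t v))) 0 (dot N g v).
Proof.
  intros Hf eps Heps.
  set (nv := vnorm N v). assert (Hnv : 0 <= nv) by apply vnorm_nonneg.
  destruct (Hf (eps / (2 * (nv + 1)))) as [d [Hd H]]; [apply Rdiv_lt_0_compat; lra|].
  assert (Hd' : 0 < d / (nv + 1)) by (apply Rdiv_lt_0_compat; lra).
  exists (mkposreal _ Hd'). simpl. intros h Hh0 Hh. rewrite Rplus_0_l.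
  specialize (H (vadd x (vscal h v))). rewrite vdist_dir, dot_sub_dir in H. fold nv in H.
  assert (Hah : 0 < Rabs h) by (apply Rabs_pos_lt; auto).
  assert (Hclose : Rabs h * nv < d).
  { apply (Rmult_lt_compat_r (nv + 1)) in Hh; [|lra].
    replace (d / (nv + 1) * (nv + 1)) with d in Hh by (field; lra). nra. }
  specialize (H Hclose).
  replace (vadd x (vscal 0 v)) with x
    by (apply functional_extensionality; intros; unfold vadd, vscal; ring).
  replace ((f (vadd x (vscal h v)) - f x) / h - dot N g v)
    with ((f (vadd x (vscal h v)) - f x - h * dot N g v) / h) by (field; auto).
  unfold Rdiv. rewrite Rabs_mult, Rabs_inv.
  apply (Rmult_le_compat_r (/ Rabs h)) in H; [|left; apply Rinv_0_lt_compat; auto].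
  eapply Rle_lt_trans; [apply H|].
  replace (eps / (2 * (nv + 1)) * (Rabs h * nv) * / Rabs h)
    with (nv / (nv + 1) * eps / 2) by (field; lra).
  assert (nv / (nv + 1) * eps <= eps) by (apply div_succ_mult_le; lra). lra.
Qed.

Lemma Frechet_dot_unique N f x g1 g2 v :
  Frechet N f x g1 -> Frechet N f x g2 -> dot N g1 v = dot N g2 v.
Proof. intros H1 H2. eapply uniqueness_limite; apply Frechet_derivable_dir; eauto. Qed.

Lemma Frechet_coord_unique N f x g1 g2 i : (i < N)%nat ->
  Frechet N f x g1 -> Frechet N f x g2 -> g1 i = g2 i.
Proof.
  intros Hi H1 H2. rewrite <- (dot_unitv N g1 i), <- (dot_unitv N g2 i) by auto.
  eapply Frechet_dot_unique; eauto.
Qed.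

Lemma Frechet_local N f f' x g :
  (exists r, 0 < r /\ forall y, vdist N y x < r -> f y = f' y) ->
  Frechet N f' x g -> Frechet N f x g.
Proof.
  intros [r [Hr Hloc]] H eps Heps. destruct (H eps Heps) as [d [Hd Hy]].
  exists (Rmin d r). split; [apply Rmin_pos; auto|]. intros y Hyd.
  assert (Hx : vdist N x x < r) by (rewrite vdist_refl; auto).
  assert (Hy' : vdist N y x < r) by (eapply Rlt_le_trans; [apply Hyd | apply Rmin_r]).
  rewrite (Hloc y Hy'), (Hloc x Hx).
  apply Hy. eapply Rlt_le_trans; [apply Hyd | apply Rmin_l].
Qed.

Lemma Frechet_lipschitz N f x g : Frechet N f x g ->
  exists d, 0 < d /\ forall y, vdist N y x < d ->
    Rabs (f y - f x) <= (L1 N g + 1) * vdist N y x.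
Proof.
  intros H. destruct (H 1 Rlt_0_1) as [d [Hd Hy]]. exists d; split; auto. intros y Hyd.
  specialize (Hy y Hyd).
  assert (HB := dot_le_vnorm_L1 N (vsub y x) g). rewrite dot_comm in HB. fold (vdist N y x) in HB.
  replace (f y - f x) with ((f y - f x - dot N g (vsub y x)) + dot N g (vsub y x)) by ring.
  eapply Rle_trans; [apply Rabs_triang | lra].
Qed.

Lemma derivable_pt_lim_remainder f z0 l : derivable_pt_lim f z0 l ->
  forall eps, 0 < eps -> exists d, 0 < d /\ forall z, Rabs (z - z0) < d ->
    Rabs (f z - f z0 - l * (z - z0)) <= eps * Rabs (z - z0).
Proof.
  intros H eps Heps. destruct (H eps Heps) as [d Hd]. exists d; split; [apply cond_pos|].
  intros z Hz. destruct (Req_dec (z - z0) 0) as [E|E].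
  - rewrite E, Rabs_R0. replace z with z0 by lra.
    replace (f z0 - f z0 - l * 0) with 0 by ring. rewrite Rabs_R0; lra.
  - specialize (Hd (z - z0) E Hz). replace (z0 + (z - z0)) with z in Hd by ring.
    replace (f z - f z0 - l * (z - z0)) with (((f z - f z0) / (z - z0) - l) * (z - z0))
      by (field; auto).
    rewrite Rabs_mult. apply Rmult_le_compat_r; [apply Rabs_pos | lra].
Qed.


Lemma Frechet_remainder_scaled N f x g a eps : Frechet N f x g -> 0 < eps ->
  exists d, 0 < d /\ forall y, vdist N y x < d ->
    Rabs a * Rabs (f y - f x - dot N g (vsub y x)) <= eps * vdist N y x.
Proof.
  intros Hf Heps. assert (Ha := Rabs_pos a).
  destruct (Hf (eps / (Rabs a + 1))) as [d [Hd H]]; [apply Rdiv_lt_0_compat; lra|].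
  exists d. split; auto. intros y Hy. assert (Hh := vnorm_nonneg N (vsub y x)).
  eapply Rle_trans; [apply Rmult_le_compat_l; [lra | apply H; auto]|].
  replace (Rabs a * (eps / (Rabs a + 1) * vdist N y x))
    with (Rabs a / (Rabs a + 1) * (eps * vdist N y x)) by (field; lra).
  apply div_succ_mult_le; [lra | apply Rmult_le_pos; [lra | auto]].
Qed.

Lemma Frechet_comp N f x g phi l : Frechet N f x g -> derivable_pt_lim phi (f x) l ->
  Frechet N (fun y => phi (f y)) x (vscal l g).
Proof.
  intros Hf Hphi eps Heps.
  set (G := L1 N g + 1). assert (HG : 0 < G) by (unfold G; assert (H := L1_nonneg N g); lra).
  destruct (Frechet_lipschitz _ _ _ _ Hf) as [d1 [Hd1 H1]]. fold G in H1.
  destruct (derivable_pt_lim_remainder _ _ _ Hphi (eps / (2 * G))) as [d2 [Hd2 H2]];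
    [apply Rdiv_lt_0_compat; lra|].
  destruct (Frechet_remainder_scaled _ _ _ _ l (eps / 2) Hf) as [d3 [Hd3 H3]]; [lra|].
  assert (Hd2G : 0 < d2 / G) by (apply Rdiv_lt_0_compat; auto).
  exists (Rmin d1 (Rmin (d2 / G) d3)). split; [repeat apply Rmin_pos; auto|].
  intros y Hy.
  assert (M1 := Rmin_l d1 (Rmin (d2 / G) d3)). assert (M2 := Rmin_r d1 (Rmin (d2 / G) d3)).
  assert (M3 := Rmin_l (d2 / G) d3). assert (M4 := Rmin_r (d2 / G) d3).
  specialize (H1 y ltac:(lra)). specialize (H3 y ltac:(lra)).
  set (h := vdist N y x) in *. assert (Hh : 0 <= h) by apply vnorm_nonneg.
  assert (Hz : Rabs (f y - f x) < d2).
  { eapply Rle_lt_trans; [apply H1|].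
    replace d2 with (G * (d2 / G)) by (field; lra). apply Rmult_lt_compat_l; lra. }
  specialize (H2 (f y) Hz).
  assert (A1 : eps / (2 * G) * Rabs (f y - f x) <= eps / 2 * h).
  { eapply Rle_trans; [apply Rmult_le_compat_l; [left; apply Rdiv_lt_0_compat; lra | apply H1]|].
    right; field; lra. }
  rewrite dot_scal_l.
  replace (phi (f y) - phi (f x) - l * dot N g (vsub y x)) with
    ((phi (f y) - phi (f x) - l * (f y - f x)) + l * (f y - f x - dot N g (vsub y x))) by ring.
  eapply Rle_trans; [apply Rabs_triang|]. rewrite Rabs_mult. lra.
Qed.

Lemma Frechet_mult N f1 f2 x g1 g2 : Frechet N f1 x g1 -> Frechet N f2 x g2 ->
  Frechet N (fun y => f1 y * f2 y) x (vadd (vscal (f2 x) g1) (vscal (f1 x) g2)).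
Proof.
  intros H1 H2 eps Heps.
  set (G1 := L1 N g1 + 1). assert (HG1 : 0 < G1) by (unfold G1; assert (H := L1_nonneg N g1); lra).
  set (G2 := L1 N g2 + 1). assert (HG2 : 0 < G2) by (unfold G2; assert (H := L1_nonneg N g2); lra).
  destruct (Frechet_lipschitz _ _ _ _ H1) as [d1 [Hd1 Lip1]]. fold G1 in Lip1.
  destruct (Frechet_lipschitz _ _ _ _ H2) as [d2 [Hd2 Lip2]]. fold G2 in Lip2.
  destruct (Frechet_remainder_scaled _ _ _ _ (f2 x) (eps / 3) H1) as [d3 [Hd3 H3]]; [lra|].
  destruct (Frechet_remainder_scaled _ _ _ _ (f1 x) (eps / 3) H2) as [d4 [Hd4 H4]]; [lra|].
  set (d5 := eps / (3 * G1 * G2)). assert (Hd5 : 0 < d5) by (apply Rdiv_lt_0_compat; nra).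
  exists (Rmin (Rmin d1 d2) (Rmin (Rmin d3 d4) d5)). split; [repeat apply Rmin_pos; auto|].
  intros y Hy.
  assert (M1 := Rmin_l (Rmin d1 d2) (Rmin (Rmin d3 d4) d5)).
  assert (M2 := Rmin_r (Rmin d1 d2) (Rmin (Rmin d3 d4) d5)).
  assert (M3 := Rmin_l d1 d2). assert (M4 := Rmin_r d1 d2).
  assert (M5 := Rmin_l (Rmin d3 d4) d5). assert (M6 := Rmin_r (Rmin d3 d4) d5).
  assert (M7 := Rmin_l d3 d4). assert (M8 := Rmin_r d3 d4).
  specialize (Lip1 y ltac:(lra)). specialize (Lip2 y ltac:(lra)).
  specialize (H3 y ltac:(lra)). specialize (H4 y ltac:(lra)).
  set (h := vdist N y x) in *. assert (Hh : 0 <= h) by apply vnorm_nonneg.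
  assert (B1 : Rabs (f1 y - f1 x) * Rabs (f2 y - f2 x) <= eps / 3 * h).
  { assert (Q : Rabs (f2 y - f2 x) <= eps / (3 * G1)).
    { eapply Rle_trans; [apply Lip2|].
      apply Rle_trans with (G2 * d5); [apply Rmult_le_compat_l; lra|].
      right; unfold d5; field; lra. }
    eapply Rle_trans; [apply Rmult_le_compat; [apply Rabs_pos | apply Rabs_pos | apply Lip1 | apply Q]|].
    right; field; lra. }
  rewrite dot_add_l, !dot_scal_l.
  replace (f1 y * f2 y - f1 x * f2 x - (f2 x * dot N g1 (vsub y x) + f1 x * dot N g2 (vsub y x)))
    with ((f1 y - f1 x) * (f2 y - f2 x) + f2 x * (f1 y - f1 x - dot N g1 (vsub y x))
          + f1 x * (f2 y - f2 x - dot N g2 (vsub y x))) by ring.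
  eapply Rle_trans; [apply Rabs_triang|].
  eapply Rle_trans; [apply Rplus_le_compat_r, Rabs_triang|]. rewrite !Rabs_mult. lra.
Qed.

(** * Sequences and compactness *)

Lemma Un_cv_const c : Un_cv (fun _ => c) c.
Proof. intros eps He; exists O; intros; unfold R_dist; rewrite Rminus_diag, Rabs_R0; auto. Qed.

Lemma Un_cv_eventually_eq u w l :
  (exists K0, forall k, (K0 <= k)%nat -> u k = w k) -> Un_cv w l -> Un_cv u l.
Proof.
  intros [K0 HK] Hw eps He. destruct (Hw eps He) as [n0 Hn0].
  exists (max K0 n0). intros n Hn. rewrite HK by lia. apply Hn0; lia.
Qed.

Lemma Un_cv_squeeze u w C l :
  (exists K0, forall k, (K0 <= k)%nat -> Rabs (u k - l) <= C * w k) ->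
  Un_cv w 0 -> Un_cv u l.
Proof.
  intros [K0 HK] Hw eps He. assert (HC := Rabs_pos C).
  destruct (Hw (eps / (Rabs C + 1))) as [n0 Hn0]; [apply Rdiv_lt_0_compat; lra|].
  exists (max K0 n0). intros n Hn. specialize (HK n ltac:(lia)). specialize (Hn0 n ltac:(lia)).
  unfold R_dist in *. rewrite Rminus_0_r in Hn0.
  assert (C * w n <= (Rabs C + 1) * Rabs (w n))
    by (assert (H := Rabs_pos (w n)); assert (H' := Rle_abs (C * w n));
        rewrite Rabs_mult in H'; nra).
  assert ((Rabs C + 1) * Rabs (w n) < eps).
  { replace eps with ((Rabs C + 1) * (eps / (Rabs C + 1))) by (field; lra).
    apply Rmult_lt_compat_l; lra. }
  lra.
Qed.

Lemma Un_cv_dot N a b la lb :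
  (forall i, (i < N)%nat -> Un_cv (fun n => a n i) (la i)) ->
  (forall i, (i < N)%nat -> Un_cv (fun n => b n i) (lb i)) ->
  Un_cv (fun n => dot N (a n) (b n)) (dot N la lb).
Proof.
  unfold dot. induction N as [|N IH]; intros Ha Hb; simpl; [apply Un_cv_const|].
  apply CV_plus; [apply IH; intros; [apply Ha | apply Hb]; lia|].
  apply (CV_mult (fun n => a n N) (fun n => b n N)); [apply Ha | apply Hb]; lia.
Qed.

Lemma Rpower_pos x e : 0 < Rpower x e.
Proof. apply exp_pos. Qed.

Lemma Un_cv_Rpower_INR_opp a : 0 < a -> Un_cv (fun k => Rpower (INR k) (- a)) 0.
Proof.
  intros Ha eps He. set (P := Rpower eps (- / a)).
  destruct (archimed P) as [Hup _]. assert (HP := Rpower_pos eps (- / a)). fold P in HP.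
  assert (Hz : (0 <= up P)%Z) by (apply le_IZR; simpl; lra).
  exists (S (Z.to_nat (up P))). intros n Hn. unfold R_dist.
  rewrite Rminus_0_r, Rabs_right by (left; apply Rpower_pos).
  assert (Hn' : P < INR n).
  { eapply Rlt_le_trans; [apply Hup|].
    rewrite <- (Z2Nat.id _ Hz), <- INR_IZR_INZ. apply le_INR; lia. }
  replace eps with (Rpower P (- a))
    by (unfold P; rewrite Rpower_mult; replace (- / a * - a) with 1 by (field; lra);
        apply Rpower_1; auto).
  rewrite (Rpower_Ropp (INR n)), (Rpower_Ropp P).
  apply Rinv_lt_contravar; [apply Rmult_lt_0_compat; apply Rpower_pos|].
  apply Rlt_Rpower_l; auto.
Qed.

Lemma Un_cv_div_INR r : Un_cv (fun k => r / INR k) 0.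
Proof.
  apply (Un_cv_eventually_eq _ (fun k => r * Rpower (INR k) (- (1)))).
  - exists 1%nat. intros k Hk. rewrite Rpower_Ropp, Rpower_1 by (apply lt_0_INR; lia).
    reflexivity.
  - rewrite <- (Rmult_0_r r). apply CV_mult; [apply Un_cv_const | apply Un_cv_Rpower_INR_opp; lra].
Qed.

Lemma contv_on_seq N S F p (y : nat -> vec) : contv_on N S F -> S p ->
  (exists K0, forall k, (K0 <= k)%nat -> S (y k)) -> Un_cv (fun k => vdist N (y k) p) 0 ->
  forall i, (i < N)%nat -> Un_cv (fun k => F (y k) i) (F p i).
Proof.
  intros HF Hp [K0 HK] Hy i Hi eps He. destruct (HF p Hp eps He) as [d [Hd Hc]].
  destruct (Hy d Hd) as [n0 Hn0]. exists (max K0 n0). intros n Hn. unfold R_dist.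
  specialize (Hn0 n ltac:(lia)). unfold R_dist in Hn0.
  rewrite Rminus_0_r, Rabs_right in Hn0 by (apply Rle_ge, vnorm_nonneg).
  specialize (Hc (y n) (HK n ltac:(lia)) Hn0). eapply Rle_lt_trans; [|apply Hc].
  apply (coord_le_vnorm N (vsub (F (y n)) (F p)) i Hi).
Qed.

Lemma strictly_increasing_ge (phi : nat -> nat) :
  (forall n, (phi n < phi (S n))%nat) -> forall n, (n <= phi n)%nat.
Proof. intros H n; induction n; [lia|]. specialize (H n); lia. Qed.

Lemma strictly_increasing_mono (phi : nat -> nat) :
  (forall n, (phi n < phi (S n))%nat) -> forall n m, (n <= m)%nat -> (phi n <= phi m)%nat.
Proof. intros H n m Hnm; induction Hnm; auto. specialize (H m); lia. Qed.

Lemma Un_cv_subseq u l phi :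
  (forall n, (phi n < phi (S n))%nat) -> Un_cv u l -> Un_cv (fun n => u (phi n)) l.
Proof.
  intros Hp Hu eps He. destruct (Hu eps He) as [n0 Hn0]. exists n0. intros n Hn.
  apply Hn0. assert (H := strictly_increasing_ge phi Hp n). lia.
Qed.

(* The standard library's [Bolzano_Weierstrass] only gives an adherence value;
   a convergent subsequence is extracted from it by choosing indices [psi n]
   with [|w (psi n) - a| < 1/(n+1)]. *)
Lemma bounded_seq_cv_subseq (w : nat -> R) K : (forall n, Rabs (w n) <= K) ->
  exists psi : nat -> nat, (forall n, (psi n < psi (S n))%nat) /\
    exists a, Un_cv (fun n => w (psi n)) a.
Proof.
  intros HK.
  destruct (Bolzano_Weierstrass w (fun c => -K <= c <= K) (compact_P3 (-K) K)) as [a Ha].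
  { intros n. specialize (HK n). revert HK; unfold Rabs; destruct (Rcase_abs (w n)); lra. }
  assert (Hex : forall n lb : nat, exists p, (lb <= p)%nat /\ Rabs (w p - a) < / (INR n + 1)).
  { intros n lb.
    assert (Hp : 0 < / (INR n + 1)) by (apply Rinv_0_lt_compat; assert (H := pos_INR n); lra).
    destruct (Ha (disc a (mkposreal _ Hp)) lb) as [p [Hp1 Hp2]].
    - exists (mkposreal _ Hp); intros y Hy; exact Hy.
    - exists p; split; auto. }
  set (pick := fun n lb => proj1_sig (constructive_indefinite_description _ (Hex n lb))).
  assert (Hpick : forall n lb, (lb <= pick n lb)%nat /\ Rabs (w (pick n lb) - a) < / (INR n + 1)).
  { intros n lb. unfold pick. destruct (constructive_indefinite_description _ (Hex n lb)); auto. }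
  set (psi := fix psi n := match n with O => pick O O | S m => pick (S m) (S (psi m)) end).
  exists psi. split.
  - intros n. simpl. destruct (Hpick (S n) (S (psi n))). lia.
  - exists a. intros eps He.
    assert (Hie : 0 < / eps) by (apply Rinv_0_lt_compat; auto).
    destruct (archimed (/ eps)) as [Ha1 _].
    assert (Hz : (0 <= up (/ eps))%Z) by (apply le_IZR; simpl; lra).
    exists (Z.to_nat (up (/ eps))). intros n Hn. unfold R_dist.
    assert (Hb : Rabs (w (psi n) - a) < / (INR n + 1)) by (destruct n; simpl; apply Hpick).
    eapply Rlt_le_trans; [apply Hb|].
    assert (INR (Z.to_nat (up (/ eps))) <= INR n) by (apply le_INR; auto).
    rewrite INR_IZR_INZ, Z2Nat.id in H by auto.
    replace eps with (/ / eps) by (field; lra). apply Rinv_le_contravar; lra.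
Qed.

Lemma bounded_vec_seq_cv_subseq N (w : nat -> vec) K :
  (forall n i, (i < N)%nat -> Rabs (w n i) <= K) ->
  forall m, exists phi : nat -> nat, (forall n, (phi n < phi (S n))%nat) /\
    exists l : vec, forall i, (i < m)%nat -> (i < N)%nat -> Un_cv (fun n => w (phi n) i) (l i).
Proof.
  intros HK m. induction m as [|m IH].
  - exists (fun n => n). split; [intros; lia|]. exists (fun _ => 0). intros; lia.
  - destruct IH as [phi [Hphi [l Hl]]].
    destruct (lt_dec m N) as [HmN|HmN].
    + destruct (bounded_seq_cv_subseq (fun n => w (phi n) m) K) as [psi [Hpsi [a Ha]]];
        [intros; apply HK; auto|].
      exists (fun n => phi (psi n)). split.
      { intros n. assert (H := strictly_increasing_mono phi Hphi _ _ (Hpsi n)).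
        specialize (Hphi (psi n)). lia. }
      exists (fun i => if Nat.eqb i m then a else l i). intros i Hi HiN.
      destruct (Nat.eqb_spec i m) as [->|Him]; [exact Ha|].
      apply (Un_cv_subseq (fun n => w (phi n) i)); auto. apply Hl; auto; lia.
    + exists phi. split; auto. exists l. intros i Hi HiN. apply Hl; auto; lia.
Qed.

Lemma L1_cv N (w : nat -> vec) l :
  (forall i, (i < N)%nat -> Un_cv (fun n => w n i) (l i)) ->
  forall eps, 0 < eps -> exists n0, forall n, (n0 <= n)%nat -> L1 N (vsub (w n) l) < eps.
Proof.
  intros Hc.
  assert (Hm : forall m, (m <= N)%nat -> forall eps, 0 < eps -> exists n0, forall n, (n0 <= n)%nat ->
     sumN m (fun i => Rabs (vsub (w n) l i)) <= INR m * eps).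
  { induction m as [|m IH]; intros Hm eps He.
    - exists O. intros; simpl; lra.
    - destruct (IH ltac:(lia) eps He) as [n1 H1]. destruct (Hc m ltac:(lia) eps He) as [n2 H2].
      exists (max n1 n2). intros n Hn. cbn [sumN]. rewrite S_INR.
      specialize (H1 n ltac:(lia)). specialize (H2 n ltac:(lia)).
      unfold R_dist in H2. unfold vsub in *. lra. }
  intros eps He. assert (HN : 0 < INR N + 1) by (assert (H := pos_INR N); lra).
  destruct (Hm N (le_n N) (eps / (INR N + 1))) as [n0 H0]; [apply Rdiv_lt_0_compat; lra|].
  exists n0. intros n Hn. specialize (H0 n Hn). unfold L1. eapply Rle_lt_trans; [apply H0|].
  assert (H := pos_INR N).
  replace eps with ((INR N + 1) * (eps / (INR N + 1))) at 2 by (field; lra).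
  apply Rmult_lt_compat_r; [apply Rdiv_lt_0_compat|]; lra.
Qed.

Lemma closure_coord_bound N O M x : (forall y, O y -> vnorm N y <= M) -> closure N O x ->
  forall i, (i < N)%nat -> Rabs (x i) <= M + 1.
Proof.
  intros HM Hx i Hi. destruct (Hx 1 Rlt_0_1) as [y [Hy Hxy]].
  assert (H1 := coord_le_vnorm N y i Hi). assert (H2 := coord_le_vnorm N (vsub x y) i Hi).
  specialize (HM y Hy). change (vsub x y i) with (x i - y i) in H2. fold (vdist N x y) in H2.
  replace (x i) with (y i + (x i - y i)) by ring. eapply Rle_trans; [apply Rabs_triang | lra].
Qed.

Lemma closure_L1_limit N O (w : nat -> vec) l : (forall n, closure N O (w n)) ->
  (forall eps, 0 < eps -> exists n0, forall n, (n0 <= n)%nat -> L1 N (vsub (w n) l) < eps) ->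
  closure N O l.
Proof.
  intros Hw Hcv eps He. assert (HNp : 0 < INR N + 1) by (assert (H := pos_INR N); lra).
  destruct (Hcv (eps / 2)) as [n0 Hn0]; [lra|]. specialize (Hn0 n0 (le_n _)).
  destruct (Hw n0 (eps / (2 * (INR N + 1)))) as [y [Hy Hwy]]; [apply Rdiv_lt_0_compat; lra|].
  exists y. split; auto. unfold vdist. eapply Rle_lt_trans; [apply vnorm_le_L1|].
  eapply Rle_lt_trans; [apply (L1_triangle _ _ (w n0))|]. rewrite L1_vsub_sym.
  assert (H2 := L1_le_vnorm N (vsub (w n0) y)). fold (vdist N (w n0) y) in H2.
  assert (INR N * vdist N (w n0) y <= (INR N + 1) * (eps / (2 * (INR N + 1))))
    by (apply Rmult_le_compat; [apply pos_INR | apply vnorm_nonneg | lra | lra]).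
  replace ((INR N + 1) * (eps / (2 * (INR N + 1)))) with (eps / 2) in H by (field; lra).
  lra.
Qed.

Lemma contv_on_closure_bounded N O F : is_bounded N O -> contv_on N (closure N O) F ->
  exists B, 0 <= B /\ forall x, closure N O x -> L1 N (F x) <= B.
Proof.
  intros [M HM] HF. apply NNPP. intros Hno.
  assert (Hex : forall n : nat, exists x, closure N O x /\ INR n < L1 N (F x)).
  { intros n. apply NNPP. intros Hn. apply Hno. exists (Rmax 0 (INR n)). split; [apply Rmax_l|].
    intros x Hx. destruct (Rle_lt_dec (L1 N (F x)) (INR n)).
    - eapply Rle_trans; [eauto | apply Rmax_r].
    - exfalso; apply Hn; exists x; auto. }
  destruct (functional_choice _ Hex) as [xs Hxs].
  destruct (bounded_vec_seq_cv_subseq N xs (M + 1)) with (m := N) as [phi [Hphi [l Hl]]].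
  { intros n i Hi. apply (closure_coord_bound N O M); auto. apply Hxs. }
  assert (Hcv := L1_cv N (fun n => xs (phi n)) l (fun i Hi => Hl i Hi Hi)).
  assert (Hcl : closure N O l) by (apply (closure_L1_limit N O (fun n => xs (phi n))); auto;
    intros; apply Hxs).
  destruct (HF l Hcl 1 Rlt_0_1) as [d [Hd Hcont]].
  destruct (Hcv d Hd) as [n1 Hn1].
  destruct (archimed (L1 N (F l) + INR N)) as [Hup _]. set (m := up (L1 N (F l) + INR N)) in *.
  assert (Hz : (0 <= m)%Z).
  { apply le_IZR. assert (H1 := L1_nonneg N (F l)). assert (H2 := pos_INR N). simpl; lra. }
  set (n := max n1 (Z.to_nat m)). specialize (Hn1 n ltac:(unfold n; lia)).
  assert (Hv : vdist N (xs (phi n)) l < d)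
    by (unfold vdist; eapply Rle_lt_trans; [apply vnorm_le_L1 | auto]).
  specialize (Hcont (xs (phi n)) (proj1 (Hxs (phi n))) Hv).
  assert (H1 := L1_le_vsub N (F (xs (phi n))) (F l)).
  assert (H2 := L1_le_vnorm N (vsub (F (xs (phi n))) (F l))).
  fold (vdist N (F (xs (phi n))) (F l)) in H2.
  assert (H3 : INR N * vdist N (F (xs (phi n))) (F l) <= INR N * 1)
    by (apply Rmult_le_compat_l; [apply pos_INR | lra]).
  assert (H4 := proj2 (Hxs (phi n))).
  assert (H5 : INR n <= INR (phi n)) by (apply le_INR, strictly_increasing_ge; auto).
  assert (H6 : IZR m <= INR n)
    by (rewrite <- (Z2Nat.id _ Hz), <- INR_IZR_INZ; apply le_INR; unfold n; lia).
  lra.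
Qed.

(** * Powers, cut-offs and the signed distance *)

Lemma Rpower_div x y a : 0 < x -> 0 < y -> Rpower (x / y) a = Rpower x a * Rpower y (- a).
Proof.
  intros. unfold Rdiv. rewrite <- Rpower_mult_distr by (auto; apply Rinv_0_lt_compat; auto).
  f_equal. unfold Rpower. rewrite ln_Rinv by auto. f_equal; ring.
Qed.

Lemma Rpower_pred x a : 0 < x -> x * Rpower x (a - 1) = Rpower x a.
Proof.
  intros. rewrite <- (Rpower_1 x) at 1 by auto. rewrite <- Rpower_plus. f_equal; ring.

Qed.

Lemma ppow_nonneg x a : 0 <= ppow x a.
Proof. unfold ppow. destruct (Rlt_dec 0 x); [left; apply Rpower_pos | lra]. Qed.

Lemma ppow_mult_le t v a : 0 < t -> 0 <= v -> ppow (t * v) a <= Rpower t a * Rpower v a.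
Proof.
  intros Ht Hv. unfold ppow. destruct (Rlt_dec 0 (t * v)).
  - rewrite Rpower_mult_distr; [lra | auto | nra].
  - assert (H1 := Rpower_pos t a). assert (H2 := Rpower_pos v a). nra.
Qed.

Lemma eventually_lt_INR_mult r eps : 0 < eps ->
  exists K0, forall k, (K0 <= k)%nat -> (1 <= k)%nat /\ r < INR k * eps.
Proof.
  intros He. destruct (archimed (Rabs r / eps)) as [Hup _].
  assert (Hre : 0 <= Rabs r / eps) by (apply Rmult_le_pos; [apply Rabs_pos | left; apply Rinv_0_lt_compat; auto]).
  assert (Hz : (0 <= up (Rabs r / eps))%Z) by (apply le_IZR; simpl; lra).
  exists (S (Z.to_nat (up (Rabs r / eps)))). intros k Hk. split; [lia|].
  assert (Hk' : IZR (up (Rabs r / eps)) <= INR k)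
    by (rewrite <- (Z2Nat.id _ Hz), <- INR_IZR_INZ; apply le_INR; lia).
  apply Rle_lt_trans with (Rabs r); [apply Rle_abs|].
  replace (Rabs r) with (Rabs r / eps * eps) by (field; lra).
  apply Rmult_lt_compat_r; lra.
Qed.

Lemma div_INR_facts r e (k : nat) : 0 < r -> (1 <= k)%nat -> r < INR k * e ->
  0 < r / INR k < e /\ r / INR k <= r /\ INR k * (r / INR k) = r.
Proof.
  intros Hr Hk Hre. assert (HkR : 1 <= INR k) by (apply (le_INR 1); auto).
  assert (Hkr : INR k * (r / INR k) = r) by (field; lra).
  split; [split|split]; auto.
  - apply Rdiv_lt_0_compat; lra.
  - apply Rmult_lt_reg_l with (INR k); lra.
  - apply Rmult_le_reg_l with (INR k); nra.
Qed.

Lemma vdist_Psi N nu sg d : 0 <= d -> vdist N (Psi nu sg d) sg = d * vnorm N (nu sg).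
Proof. intros. unfold Psi. rewrite vdist_dir, Rabs_right; lra. Qed.

Lemma derivable_pt_lim_local f g x l :
  (exists d, 0 < d /\ forall y, Rabs (y - x) < d -> f y = g y) ->
  derivable_pt_lim f x l -> derivable_pt_lim g x l.
Proof.
  intros [d [Hd Hfg]] H eps He. destruct (H eps He) as [d1 Hd1].
  assert (Hm : 0 < Rmin d d1) by (apply Rmin_pos; auto; apply cond_pos).
  exists (mkposreal _ Hm). simpl. intros h Hh0 Hh.
  assert (Hhd : Rabs (x + h - x) < d)
    by (replace (x + h - x) with h by ring; eapply Rlt_le_trans; [apply Hh | apply Rmin_l]).
  assert (Hxd : Rabs (x - x) < d) by (rewrite Rminus_diag, Rabs_R0; auto).
  rewrite <- (Hfg _ Hhd), <- (Hfg _ Hxd).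
  apply Hd1; auto. eapply Rlt_le_trans; [apply Hh | apply Rmin_r].
Qed.

Lemma smooth_compact_support_derivative rho : smooth rho ->
  (exists a, 0 < a < 2 /\ forall t, a < Rabs t -> rho t = 0) ->
  exists rp : R -> R, (forall t, derivable_pt_lim rho t (rp t)) /\
    (exists M, 0 <= M /\ forall t, Rabs (rp t) <= M) /\
    (forall t, 2 <= Rabs t -> rp t = 0).
Proof.
  intros [D [HD0 HD]] [a [Ha Hsupp]].
  assert (Hd : forall t, derivable_pt_lim rho t (D 1%nat t)).
  { intros t. apply (derivable_pt_lim_local (D O)); [|apply HD].
    exists 1; split; [lra | intros; apply HD0]. }
  assert (Hz : forall t, 2 <= Rabs t -> D 1%nat t = 0).
  { intros t Ht. eapply uniqueness_limite; [apply Hd|].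
    apply (derivable_pt_lim_local (fun _ => 0)); [|apply derivable_pt_lim_const].
    exists (Rabs t - a). split; [lra|]. intros y Hy. symmetry. apply Hsupp.
    assert (Rabs t <= Rabs y + Rabs (y - t)).
    { replace t with (y - (y - t)) at 1 by ring.
      eapply Rle_trans; [apply Rabs_triang | rewrite Rabs_Ropp; lra]. }
    lra. }
  exists (D 1%nat). split; [auto | split; [|auto]].
  assert (Hc : forall t, continuity_pt (D 1%nat) t)
    by (intros t; apply (derivable_continuous_pt _ t (exist _ (D 2%nat t) (HD 1%nat t)))).
  destruct (continuity_ab_maj (D 1%nat) (-2) 2) as [M1 [HM1 _]]; [lra | intros; apply Hc|].
  destruct (continuity_ab_maj (fun t => - D 1%nat t) (-2) 2) as [M2 [HM2 _]];
    [lra | intros; apply continuity_pt_opp, Hc|].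
  assert (H1 := Rle_abs (D 1%nat M1)). assert (H2 := Rle_abs (- D 1%nat M2)).
  rewrite Rabs_Ropp in H2.
  assert (H3 := Rabs_pos (D 1%nat M1)). assert (H4 := Rabs_pos (D 1%nat M2)).
  exists (Rabs (D 1%nat M1) + Rabs (D 1%nat M2)). split; [lra|].
  intros t. destruct (Rle_lt_dec 2 (Rabs t)) as [Ht|Ht].
  - rewrite Hz, Rabs_R0 by auto. lra.
  - assert (Ht' : -2 <= t <= 2) by (revert Ht; unfold Rabs; destruct (Rcase_abs t); lra).
    specialize (HM1 t Ht'). specialize (HM2 t Ht').
    unfold Rabs at 1; destruct (Rcase_abs (D 1%nat t)); lra.
Qed.

Definition hfun_deriv (s : R) (rho rp : R -> R) (r : R) : R :=
  s * Rpower r (s - 1) * (1 - rho r) - Rpower r s * rp r.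

Lemma derivable_pt_lim_hfun s rho rp r : 0 < r -> derivable_pt_lim rho r (rp r) ->
  derivable_pt_lim (hfun s rho) r (hfun_deriv s rho rp r).
Proof.
  intros Hr Hd. apply (derivable_pt_lim_local (fun t => Rpower t s * (1 - rho t))).
  - exists r. split; auto. intros y Hy. unfold hfun, ppow, zeta.
    destruct (Rlt_dec 0 y); auto.
    exfalso; revert Hy; unfold Rabs; destruct (Rcase_abs (y - r)); lra.
  - replace (hfun_deriv s rho rp r)
      with (s * Rpower r (s - 1) * (1 - rho r) + Rpower r s * (0 - rp r))
      by (unfold hfun_deriv; ring).
    apply (derivable_pt_lim_mult (fun t => Rpower t s) (fun t => 1 - rho t));
      [apply derivable_pt_lim_power; auto|].
    apply (derivable_pt_lim_minus (fun _ => 1) rho); [apply derivable_pt_lim_const | auto].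
Qed.

Lemma hfun_deriv_bound s rho rp M r : 0 < s -> 0 < r ->
  (forall t, Rabs (1 - rho t) <= 1) -> (forall t, Rabs (rp t) <= M) ->
  (forall t, 2 <= Rabs t -> rp t = 0) ->
  Rabs (hfun_deriv s rho rp r) <= (s + 2 * M) * Rpower r (s - 1).
Proof.
  intros Hs Hr Hrho Hrp Hrp2. unfold hfun_deriv. assert (Hp := Rpower_pos r (s - 1)).
  eapply Rle_trans; [apply (Rabs_triang _ (- (Rpower r s * rp r)))|].
  rewrite Rabs_Ropp, !Rabs_mult.
  rewrite (Rabs_right s), (Rabs_right (Rpower r (s - 1))), (Rabs_right (Rpower r s))
    by (apply Rle_ge; left; auto using Rpower_pos).
  assert (T1 : s * Rpower r (s - 1) * Rabs (1 - rho r) <= s * Rpower r (s - 1))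
    by (assert (H := Hrho r); assert (H' := Rabs_pos (1 - rho r)); assert (0 <= s * Rpower r (s - 1)) by nra; nra).
  assert (T2 : Rpower r s * Rabs (rp r) <= 2 * M * Rpower r (s - 1)).
  { rewrite <- (Rpower_pred r s) by auto. assert (H := Hrp r). assert (H' := Rabs_pos (rp r)).
    destruct (Rle_lt_dec 2 r) as [H2|H2].
    - rewrite Hrp2, Rabs_R0 by (rewrite Rabs_right; lra). nra.
    - assert (r * Rabs (rp r) <= 2 * M) by nra. nra. }
  lra.
Qed.

Lemma derivable_pt_lim_zetak rho rp (k : nat) z :
  (forall t, derivable_pt_lim rho t (rp t)) ->
  derivable_pt_lim (zetak rho k) z (- (rp (INR k * z) * INR k)).
Proof.
  intros Hd. replace (- (rp (INR k * z) * INR k)) with (0 - rp (INR k * z) * INR k) by ring.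
  apply (derivable_pt_lim_minus (fun _ => 1) (fun z => rho (INR k * z)));
    [apply derivable_pt_lim_const|].
  apply (derivable_pt_lim_comp (fun z => INR k * z) rho); [|apply Hd].
  assert (H := derivable_pt_lim_mult (fun _ => INR k) (fun z => z) z 0 1
                 (derivable_pt_lim_const _ _) (derivable_pt_lim_id _)).
  cbv beta in H. replace (0 * z + INR k * 1) with (INR k) in H by ring. exact H.
Qed.

Lemma closure_incl N (O : vec -> Prop) x : O x -> closure N O x.
Proof. intros Hx e He. exists x. split; auto. rewrite vdist_refl; auto. Qed.

Lemma signed_distance_boundary N Omega delta :
  (exists eta, 0 < eta /\ forall x,
      (exists sg, boundary N Omega sg /\ vdist N x sg < eta) ->
      forall d1 d2, IsInfDist N (fun y => ~ Omega y) x d1 ->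
                    IsInfDist N Omega x d2 -> delta x = d1 - d2) ->
  forall x, boundary N Omega x -> delta x = 0.
Proof.
  intros [eta [Heta H]] x Hx.
  assert (Hnear : exists sg, boundary N Omega sg /\ vdist N x sg < eta)
    by (exists x; rewrite vdist_refl; auto).
  rewrite (H x Hnear 0 0); [ring | |].
  - split; [intros; apply vnorm_nonneg|].
    intros e He. exists x. split; [apply Hx | rewrite vdist_refl; lra].
  - split; [intros; apply vnorm_nonneg|].
    intros e He. destruct (proj1 Hx e He) as [y [Hy1 Hy2]]. exists y; split; auto; lra.
Qed.

Lemma Omega_iff_delta_pos N (Omega : vec -> Prop) (delta : vec -> R) :
  (forall x, boundary N Omega x -> delta x = 0) ->
  (forall x, Omega x -> 0 < delta x) ->
  (forall x, ~ closure N Omega x -> delta x < 0) ->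
  forall x, Omega x <-> 0 < delta x.
Proof.
  intros Hb0 Hpos Hneg x. split; [auto|]. intros Hx.
  destruct (classic (Omega x)) as [H|H]; auto.
  destruct (classic (closure N Omega x)) as [Hc|Hc].
  - rewrite (Hb0 x (conj Hc H)) in Hx; lra.
  - specialize (Hneg x Hc); lra.
Qed.

Lemma lipschitz_field_bounded N (O : vec -> Prop) (F : vec -> vec) L :
  is_bounded N O -> (forall x y, vnorm N (vsub (F x) (F y)) <= L * vdist N x y) ->
  exists B, 0 <= B /\ forall x, O x -> L1 N (F x) <= B.
Proof.
  intros [M HM] HL. set (z0 := fun _ : nat => 0).
  assert (H1 := L1_nonneg N (F z0)). assert (H2 := pos_INR N).
  assert (H3 := Rabs_pos L). assert (H4 := Rabs_pos M).
  exists (L1 N (F z0) + INR N * (Rabs L * Rabs M)).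
  split; [assert (0 <= Rabs L * Rabs M) by nra; nra|].
  intros x Hx. eapply Rle_trans; [apply (L1_le_vsub N (F x) (F z0))|].
  apply Rplus_le_compat_l. eapply Rle_trans; [apply L1_le_vnorm|].
  apply Rmult_le_compat_l; [apply pos_INR|]. eapply Rle_trans; [apply HL|].
  assert (Hv : vdist N x z0 = vnorm N x) by (apply vnorm_ext; intros; unfold vsub, z0; ring).
  rewrite Hv. specialize (HM x Hx). assert (H0 := vnorm_nonneg N x).
  assert (L <= Rabs L) by apply Rle_abs. assert (M <= Rabs M) by apply Rle_abs. nra.
Qed.

(** * The rescaled gradient of U_k *)

Lemma rescaling_identity k d s a b c p q : 0 < k -> 0 < d ->
  Rpower k (s - 1) * (a * b - p * Rpower d s * (q * k) * c) =
  a * Rpower (k * d) (s - 1) * d *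
    (Rpower d (- s) * b + p * Rpower d s * (- s * Rpower d (- s - 1) * c))
  + (s * Rpower (k * d) (s - 1) * a - Rpower (k * d) s * q) * p * c.
Proof.
  intros Hk Hd.
  assert (Hinv : forall x, 0 < x -> Rpower x (- (1)) = / x)
    by (intros; rewrite Rpower_Ropp, Rpower_1; auto).
  assert (E1 : Rpower d (- s) = / Rpower d s) by apply Rpower_Ropp.
  assert (E2 : Rpower d (- s - 1) = / Rpower d s * / d)
    by (unfold Rminus; rewrite Rpower_plus, E1, Hinv; auto).
  assert (E3 : Rpower d (s - 1) = Rpower d s * / d)
    by (unfold Rminus; rewrite Rpower_plus, Hinv; auto).
  assert (E4 : Rpower k s = Rpower k (s - 1) * k)
    by (rewrite <- (Rpower_pred k s) at 1 by auto; ring).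
  rewrite <- !Rpower_mult_distr, E4, E3, E2, E1 by auto.
  assert (Hb := Rpower_pos d s). field. lra.
Qed.

Section Rescaled_gradient.

Variables (N : nat) (Omega : vec -> Prop) (delta : vec -> R) (Dd : vec -> vec)
  (nu : vec -> vec) (epsO : R) (rho rp : R -> R) (s : R) (u psi : vec -> R) (gu : vec -> vec)
  (X : vec -> vec) (alpha c BX BD Apsi Ch B Ld : R).

Hypothesis HOopen : is_open N Omega.
Hypothesis HOmega_delta : forall x, Omega x <-> 0 < delta x.
Hypothesis HDd : forall x, Frechet N delta x (Dd x).
Hypothesis HPsi_delta : forall sg r, boundary N Omega sg -> Rabs r < epsO ->
  delta (Psi nu sg r) = r.
Hypothesis Hrp : forall t, derivable_pt_lim rho t (rp t).
Hypothesis Hgu : forall x, Omega x -> Frechet N u x (gu x).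
Hypothesis Hpsi_def : forall x, Omega x -> psi x = u x / Rpower (delta x) s.

Definition grad_psi (x : vec) : vec :=
  vadd (vscal (Rpower (delta x) (- s)) (gu x))
       (vscal (u x) (vscal (- s * Rpower (delta x) (- s - 1)) (Dd x))).

Lemma Frechet_grad_psi x : Omega x -> Frechet N psi x (grad_psi x).
Proof.
  intros Hx. apply (Frechet_local N psi (fun y => u y * Rpower (delta y) (- s))).
  - destruct (HOopen x Hx) as [r [Hr Hy]]. exists r; split; auto. intros y Hyr.
    rewrite Hpsi_def, Rpower_Ropp by auto. reflexivity.
  - apply (Frechet_mult N u (fun y => Rpower (delta y) (- s))); auto.
    apply (Frechet_comp N delta x (Dd x) (fun z => Rpower z (- s))); auto.
    apply derivable_pt_lim_power, HOmega_delta; auto.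
Qed.

Lemma Frechet_Uk_dot (k : nat) x g v : Omega x -> Frechet N (Uk rho delta u k) x g ->
  dot N g v = (1 - rho (INR k * delta x)) * dot N (gu x) v
              - u x * (rp (INR k * delta x) * INR k) * dot N (Dd x) v.
Proof.
  intros Hx Hg.
  assert (Hzeta := Frechet_comp N delta x (Dd x) _ _ (HDd x)
                     (derivable_pt_lim_zetak rho rp k (delta x) Hrp)).
  assert (HU := Frechet_mult N u _ x (gu x) _ (Hgu x Hx) Hzeta).
  rewrite (Frechet_dot_unique N _ x g _ v Hg HU), dot_add_l, !dot_scal_l.
  unfold zetak. ring.
Qed.

Lemma Psi_delta sg d : boundary N Omega sg -> 0 < d < epsO -> delta (Psi nu sg d) = d.
Proof. intros. apply HPsi_delta; auto. rewrite Rabs_right; lra. Qed.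

Lemma Psi_in_Omega sg d : boundary N Omega sg -> 0 < d < epsO -> Omega (Psi nu sg d).
Proof. intros. apply HOmega_delta. rewrite Psi_delta; auto; lra. Qed.

Lemma Uk_gradient_rescaled (k : nat) sg d g v :
  (0 < k)%nat -> boundary N Omega sg -> 0 < d < epsO ->
  Frechet N (Uk rho delta u k) (Psi nu sg d) g ->
  Rpower (INR k) (s - 1) * dot N g v =
    (1 - rho (INR k * d)) * Rpower (INR k * d) (s - 1) * d * dot N (grad_psi (Psi nu sg d)) v
    + hfun_deriv s rho rp (INR k * d) * psi (Psi nu sg d) * dot N (Dd (Psi nu sg d)) v.
Proof.
  intros Hk Hsg Hd Hg. set (x := Psi nu sg d).
  assert (Hx : Omega x) by (apply Psi_in_Omega; auto).
  assert (Hdx : delta x = d) by (apply Psi_delta; auto).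
  assert (Hu : u x = psi x * Rpower d s)
    by (rewrite Hpsi_def, Hdx by auto; field; apply Rgt_not_eq, Rpower_pos).
  rewrite (Frechet_Uk_dot k x g v Hx Hg).
  unfold grad_psi, hfun_deriv. rewrite dot_add_l, !dot_scal_l, Hdx, Hu.
  apply rescaling_identity; [apply lt_0_INR; lia | lra].
Qed.

Hypothesis Halpha : 0 < alpha.
Hypothesis Hc : 0 <= c.
Hypothesis HBX0 : 0 <= BX.
Hypothesis HBD0 : 0 <= BD.
Hypothesis HApsi0 : 0 <= Apsi.
Hypothesis HBX : forall x, closure N Omega x -> L1 N (X x) <= BX.
Hypothesis HBD : forall x, Omega x -> L1 N (Dd x) <= BD.
Hypothesis HApsi : forall x, closure N Omega x -> Rabs (psi x) <= Apsi.
Hypothesis Hpsi_grad : forall x g, Omega x -> Frechet N psi x g ->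
  vnorm N g <= c * Rpower (delta x) (alpha - 1).
Hypothesis Hrho1 : forall t, Rabs (1 - rho t) <= 1.
Hypothesis HCh : 0 <= Ch.
Hypothesis Hhder : forall r, 0 < r -> Rabs (hfun_deriv s rho rp r) <= Ch * Rpower r (s - 1).

Lemma cutoff_term_bound x d r : Omega x -> delta x = d -> 0 < r ->
  Rabs ((1 - rho r) * Rpower r (s - 1) * d * dot N (grad_psi x) (X x))
    <= c * BX * Rpower r (s - 1) * Rpower d alpha.
Proof.
  intros Hx Hdx Hr. assert (Hd : 0 < d) by (rewrite <- Hdx; apply HOmega_delta; auto).
  assert (Hgp : vnorm N (grad_psi x) <= c * Rpower d (alpha - 1))
    by (rewrite <- Hdx; apply Hpsi_grad, Frechet_grad_psi; auto).
  assert (HXx := HBX x (closure_incl N Omega x Hx)).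
  assert (HP : Rabs (dot N (grad_psi x) (X x)) <= c * Rpower d (alpha - 1) * BX).
  { eapply Rle_trans; [apply dot_le_vnorm_L1|].
    apply Rmult_le_compat; auto using vnorm_nonneg, L1_nonneg. }
  assert (Hps := Rpower_pos r (s - 1)). assert (H1 := Hrho1 r).
  assert (H2 := Rabs_pos (1 - rho r)). assert (H3 := Rabs_pos (dot N (grad_psi x) (X x))).
  rewrite !Rabs_mult, (Rabs_right (Rpower r (s - 1))), (Rabs_right d) by lra.
  rewrite <- (Rpower_pred d alpha) by auto.
  apply Rle_trans with (Rpower r (s - 1) * d * (c * Rpower d (alpha - 1) * BX)); [|right; ring].
  apply Rle_trans with (1 * Rpower r (s - 1) * d * Rabs (dot N (grad_psi x) (X x))).
  - repeat apply Rmult_le_compat_r; lra.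
  - rewrite Rmult_1_l. apply Rmult_le_compat_l; nra.
Qed.

Lemma boundary_term_bound x r : Omega x -> 0 < r ->
  Rabs (hfun_deriv s rho rp r * psi x * dot N (Dd x) (X x))
    <= Ch * Apsi * BD * BX * Rpower r (s - 1).
Proof.
  intros Hx Hr. assert (Hcl := closure_incl N Omega x Hx).
  assert (HQ : Rabs (dot N (Dd x) (X x)) <= BD * BX).
  { eapply Rle_trans; [apply dot_le_vnorm_L1|].
    apply Rmult_le_compat; auto using vnorm_nonneg, L1_nonneg.
    eapply Rle_trans; [apply vnorm_le_L1 | auto]. }
  rewrite !Rabs_mult.
  apply Rle_trans with ((Ch * Rpower r (s - 1)) * Apsi * (BD * BX)); [|right; ring].
  apply Rmult_le_compat; auto using Rabs_pos.
  - apply Rmult_le_pos; apply Rabs_pos.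
  - apply Rmult_le_compat; auto using Rabs_pos.
Qed.

Lemma Uk_gradient_bound : exists C, 0 < C /\
  forall (k : nat) sg r g, (1 <= k)%nat -> boundary N Omega sg -> 0 < r < INR k * epsO ->
    Frechet N (Uk rho delta u k) (Psi nu sg (r / INR k)) g ->
    Rpower (INR k) (s - 1) * Rabs (dot N g (X (Psi nu sg (r / INR k))))
      <= C * (Rpower r (s - 1) + Rpower r (s - 1 + alpha)).
Proof.
  assert (C1 : 0 <= c * BX) by (apply Rmult_le_pos; auto).
  assert (C2 : 0 <= Ch * Apsi * BD * BX) by (repeat apply Rmult_le_pos; auto).
  exists (c * BX + Ch * Apsi * BD * BX + 1). split; [lra|].
  intros k sg r g Hk Hsg Hr Hg. set (d := r / INR k).
  destruct (div_INR_facts r epsO k) as [Hd [Hdr Hkd]]; try tauto. fold d in Hd, Hdr, Hkd.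
  assert (Hx := Psi_in_Omega sg d Hsg Hd). assert (Hdx := Psi_delta sg d Hsg Hd).
  rewrite <- (Rabs_right (Rpower (INR k) (s - 1))) by (left; apply Rpower_pos).
  rewrite <- Rabs_mult, (Uk_gradient_rescaled k sg d g), Hkd by (auto; lia).
  set (x := Psi nu sg d) in *.
  eapply Rle_trans; [apply Rabs_triang|].
  assert (T1 := cutoff_term_bound x d r Hx Hdx (proj1 Hr)).
  assert (T2 := boundary_term_bound x r Hx (proj1 Hr)).
  assert (Hda : Rpower d alpha <= Rpower r alpha) by (apply Rle_Rpower_l; lra).
  assert (Hps := Rpower_pos r (s - 1)). assert (Hpa := Rpower_pos r alpha).
  assert (c * BX * Rpower r (s - 1) * Rpower d alpha <= c * BX * (Rpower r (s - 1) * Rpower r alpha))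
    by (rewrite <- Rmult_assoc; apply Rmult_le_compat_l; nra).
  assert (0 <= c * BX * Rpower r (s - 1)) by nra.
  assert (0 <= Rpower r (s - 1) * Rpower r alpha) by nra.
  assert (0 <= Ch * Apsi * BD * BX * (Rpower r (s - 1) * Rpower r alpha))
    by (apply Rmult_le_pos; auto).
  rewrite Rpower_plus. lra.
Qed.

Hypothesis HepsO : 0 < epsO.
Hypothesis HX : contv_on N (closure N Omega) X.
Hypothesis Hpsi_Holder : forall x y, closure N Omega x -> closure N Omega y ->
  Rabs (psi x - psi y) <= B * ppow (vdist N x y) alpha.
Hypothesis HLd : forall x y, vnorm N (vsub (Dd x) (Dd y)) <= Ld * vdist N x y.
Hypothesis Hnu : forall sg, boundary N Omega sg -> Frechet N delta sg (nu sg).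

Lemma cutoff_term_cv sg r : boundary N Omega sg -> 0 < r ->
  Un_cv (fun k => (1 - rho r) * Rpower r (s - 1) * (r / INR k) *
                  dot N (grad_psi (Psi nu sg (r / INR k))) (X (Psi nu sg (r / INR k)))) 0.
Proof.
  intros Hsg Hr. destruct (eventually_lt_INR_mult r epsO HepsO) as [K0 HK0].
  apply (Un_cv_squeeze _ (fun k => Rpower (INR k) (- alpha))
                         (c * BX * Rpower r (s - 1) * Rpower r alpha));
    [|apply Un_cv_Rpower_INR_opp; auto].
  exists K0. intros k Hk. destruct (HK0 k Hk) as [Hk1 Hrk].
  destruct (div_INR_facts r epsO k) as [Hd _]; auto.
  rewrite Rminus_0_r.
  eapply Rle_trans; [apply cutoff_term_bound; [apply Psi_in_Omega | apply Psi_delta | ]; auto|].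
  rewrite Rpower_div by (auto; apply lt_0_INR; lia). right; ring.
Qed.

Lemma boundary_term_cv sg r : boundary N Omega sg -> 0 < r ->
  Un_cv (fun k => hfun_deriv s rho rp r * psi (Psi nu sg (r / INR k)) *
                  dot N (Dd (Psi nu sg (r / INR k))) (X (Psi nu sg (r / INR k))))
        (hfun_deriv s rho rp r * psi sg * dot N (nu sg) (X sg)).
Proof.
  intros Hsg Hr. destruct (eventually_lt_INR_mult r epsO HepsO) as [K0 HK0].
  set (nv := vnorm N (nu sg)). assert (Hnv := vnorm_nonneg N (nu sg)). fold nv in Hnv.
  assert (Hdk : forall k, (1 <= k)%nat -> 0 < r / INR k)
    by (intros; apply Rdiv_lt_0_compat; [lra | apply lt_0_INR; lia]).
  assert (Hdist : forall k, (1 <= k)%nat -> vdist N (Psi nu sg (r / INR k)) sg = r / INR k * nv)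
    by (intros; apply vdist_Psi; left; auto).
  assert (HOk : forall k, (K0 <= k)%nat -> Omega (Psi nu sg (r / INR k))).
  { intros k Hk. destruct (HK0 k Hk). apply Psi_in_Omega; auto. apply div_INR_facts; auto. }
  apply CV_mult; [apply CV_mult; [apply Un_cv_const|] | apply Un_cv_dot].
  - apply (Un_cv_squeeze _ (fun k => Rpower (INR k) (- alpha))
                           (Rabs B * Rpower r alpha * Rpower nv alpha));
      [|apply Un_cv_Rpower_INR_opp; auto].
    exists K0. intros k Hk. destruct (HK0 k Hk) as [Hk1 _].
    eapply Rle_trans; [apply Hpsi_Holder; [apply closure_incl, HOk; auto | apply Hsg]|].
    rewrite Hdist by auto.
    eapply Rle_trans; [apply Rmult_le_compat_r; [apply ppow_nonneg | apply Rle_abs]|].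
    eapply Rle_trans; [apply Rmult_le_compat_l; [apply Rabs_pos | apply ppow_mult_le; auto]|].
    rewrite Rpower_div by (auto; apply lt_0_INR; lia). right; ring.
  - intros i Hi. apply (Un_cv_squeeze _ (fun k => r / INR k) (Ld * nv)); [|apply Un_cv_div_INR].
    exists 1%nat. intros k Hk.
    rewrite <- (Frechet_coord_unique N delta sg (Dd sg) (nu sg) i Hi (HDd sg) (Hnu sg Hsg)).
    eapply Rle_trans; [apply (coord_le_vnorm N (vsub (Dd _) (Dd sg)) i Hi)|].
    eapply Rle_trans; [apply HLd|]. rewrite Hdist by auto. right; ring.
  - intros i Hi. apply (contv_on_seq N (closure N Omega)); auto; [apply Hsg | |].
    + exists K0; intros; apply closure_incl, HOk; auto.
    + apply (Un_cv_squeeze _ (fun k => r / INR k) nv); [|apply Un_cv_div_INR].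
      exists 1%nat. intros k Hk. rewrite Rminus_0_r, Hdist by auto.
      rewrite Rabs_right; [right; ring | apply Rle_ge, Rmult_le_pos; auto; left; auto].
Qed.

Lemma Uk_gradient_limit sg r : boundary N Omega sg -> 0 < r ->
  forall l, derivable_pt_lim (hfun s rho) r l ->
  forall G : nat -> vec,
    (forall k, (1 <= k)%nat -> r < INR k * epsO ->
       Frechet N (Uk rho delta u k) (Psi nu sg (r / INR k)) (G k)) ->
    Un_cv (fun k => Rpower (INR k) (s - 1) * dot N (G k) (X (Psi nu sg (r / INR k))))
          (l * psi sg * dot N (X sg) (nu sg)).
Proof.
  intros Hsg Hr l Hl G HG.
  replace l with (hfun_deriv s rho rp r)
    by (eapply uniqueness_limite; [apply derivable_pt_lim_hfun; auto | exact Hl]).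
  rewrite dot_comm, <- (Rplus_0_l (hfun_deriv s rho rp r * psi sg * dot N (nu sg) (X sg))).
  destruct (eventually_lt_INR_mult r epsO HepsO) as [K0 HK0].
  eapply Un_cv_eventually_eq;
    [|apply CV_plus; [apply (cutoff_term_cv sg r) | apply (boundary_term_cv sg r)]; auto].
  exists K0. intros k Hk. destruct (HK0 k Hk) as [Hk1 Hrk].
  destruct (div_INR_facts r epsO k) as [Hd [_ Hkd]]; auto.
  rewrite (Uk_gradient_rescaled k sg (r / INR k) (G k)), Hkd; auto; lia.
Qed.

End Rescaled_gradient.

Theorem lemma6p1
  (N : nat) (HN : (0 < N)%nat)
  (Omega : vec -> Prop)
  (HOopen : is_open N Omega) (HObdd : is_bounded N Omega)
  (HOC11 : C11_domain N Omega)
  (delta : vec -> R) (Hdelta11 : C11 N delta)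
  (Hdelta_sd : exists eta, 0 < eta /\ forall x,
      (exists sg, boundary N Omega sg /\ vdist N x sg < eta) ->
      forall d1 d2, IsInfDist N (fun y => ~ Omega y) x d1 ->
                    IsInfDist N Omega x d2 -> delta x = d1 - d2)
  (Hdelta_pos : forall x, Omega x -> 0 < delta x)
  (Hdelta_neg : forall x, ~ closure N Omega x -> delta x < 0)
  (nu : vec -> vec)
  (Hnu : forall sg, boundary N Omega sg -> Frechet N delta sg (nu sg))
  (epsO : R) (HepsO : 0 < epsO)
  (HPsi_delta : forall sg r, boundary N Omega sg -> Rabs r < epsO ->
      delta (Psi nu sg r) = r)
  (HPsi_onto : forall x, Rabs (delta x) < epsO ->
      exists sg r, boundary N Omega sg /\ Rabs r < epsO /\
                   vdist N x (Psi nu sg r) = 0)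
  (HPsi_biLip : exists L, 0 < L /\ forall sg sg' r r',
      boundary N Omega sg -> boundary N Omega sg' ->
      Rabs r < epsO -> Rabs r' < epsO ->
      vdist N (Psi nu sg r) (Psi nu sg' r') <= L * (vdist N sg sg' + Rabs (r - r')) /\
      vdist N sg sg' + Rabs (r - r') <= L * vdist N (Psi nu sg r) (Psi nu sg' r'))
  (rho : R -> R) (Hrho_smooth : smooth rho)
  (Hrho_supp : exists a, 0 < a < 2 /\ forall t, a < Rabs t -> rho t = 0)
  (Hrho_bnd : forall t, 0 <= rho t <= 1)
  (Hrho_one : forall t, -1 < t < 1 -> rho t = 1)
  (s : R) (Hs : 0 < s < 1)
  (X : vec -> vec) (HX : contv_on N (closure N Omega) X)
  (u : vec -> R)
  (Hu_Cs : exists K, forall x y, closure N Omega x -> closure N Omega y ->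
      Rabs (u x - u y) <= K * ppow (vdist N x y) s)
  (Hu_C1 : exists gu : vec -> vec,
      (forall x, Omega x -> Frechet N u x (gu x)) /\ contv_on N Omega gu)
  (Hu_out : forall x, ~ Omega x -> u x = 0)
  (psi : vec -> R)
  (Hpsi_def : forall x, Omega x -> psi x = u x / Rpower (delta x) s)
  (alpha c : R) (Halpha : 0 < alpha < 1) (Hc : 0 < c)
  (Hpsi_Calpha : exists A B, A + B <= c /\
      (forall x, closure N Omega x -> Rabs (psi x) <= A) /\
      (forall x y, closure N Omega x -> closure N Omega y ->
         Rabs (psi x - psi y) <= B * ppow (vdist N x y) alpha))
  (Hpsi_grad : forall x g, Omega x -> Frechet N psi x g ->
      vnorm N g <= c * Rpower (delta x) (alpha - 1)) :
  (exists C, 0 < C /\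
     forall (k : nat) sg r g, (1 <= k)%nat -> boundary N Omega sg ->
       0 < r < INR k * epsO ->
       Frechet N (Uk rho delta u k) (Psi nu sg (r / INR k)) g ->
       Rpower (INR k) (s - 1) * Rabs (dot N g (X (Psi nu sg (r / INR k))))
         <= C * (Rpower r (s - 1) + Rpower r (s - 1 + alpha)))
  /\
  (forall sg r, boundary N Omega sg -> 0 < r ->
     forall l, derivable_pt_lim (hfun s rho) r l ->
     forall G : nat -> vec,
       (forall k, (1 <= k)%nat -> r < INR k * epsO ->
          Frechet N (Uk rho delta u k) (Psi nu sg (r / INR k)) (G k)) ->
       Un_cv (fun k => Rpower (INR k) (s - 1) *
                       dot N (G k) (X (Psi nu sg (r / INR k))))
             (l * psi sg * dot N (X sg) (nu sg))).
Proof.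
  destruct Hdelta11 as [Dd [Ld [HDd HLd]]].
  destruct Hu_C1 as [gu [Hgu _]].
  destruct (smooth_compact_support_derivative rho Hrho_smooth Hrho_supp)
    as [rp [Hrp [[M [HM0 HM]] Hrp2]]].
  destruct (contv_on_closure_bounded N Omega X HObdd HX) as [BX [HBX0 HBX]].
  destruct (lipschitz_field_bounded N Omega Dd Ld HObdd HLd) as [BD [HBD0 HBD]].
  destruct Hpsi_Calpha as [A [B [_ [HA HB]]]].
  assert (HOmega_delta : forall x, Omega x <-> 0 < delta x)
    by (apply (Omega_iff_delta_pos N); auto; apply signed_distance_boundary; auto).
  assert (HApsi : forall x, closure N Omega x -> Rabs (psi x) <= Rabs A)
    by (intros; eapply Rle_trans; [apply HA; auto | apply Rle_abs]).
  assert (Hrho1 : forall t, Rabs (1 - rho t) <= 1)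
    by (intros t; destruct (Hrho_bnd t); rewrite Rabs_right; lra).
  assert (Hhder : forall r, 0 < r ->
            Rabs (hfun_deriv s rho rp r) <= (s + 2 * M) * Rpower r (s - 1))
    by (intros; apply hfun_deriv_bound; tauto).
  split.
  - apply (Uk_gradient_bound N Omega delta Dd nu epsO rho rp s u psi gu X alpha c BX BD
             (Rabs A) (s + 2 * M)); auto using Rabs_pos; lra.
  - apply (Uk_gradient_limit N Omega delta Dd nu epsO rho rp s u psi gu X alpha c BX B Ld);
      auto; lra.
Qed.
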